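(* Let $\{(\phi^n,\mu^n,R^n,\xi^n)\}$ be generated by Scheme 2A and set $M:=R^0=\sqrt{E[\phi_{in}]}$. Then for all $n\ge0$: $0<R^{n+1}\le R^n\le M$ and $0<\xi^{n+1}\le\frac{M}{\sqrt{c_0}}$.
   Context: Standing setup: $\Omega\subset\mathbb{R}^d$ ($d=2,3$) is a bounded domain with smooth boundary and outward unit normal $\mathbf{n}$; $\|\cdot\|_0$ is the $L^2(\Omega)$ norm. Let $\lambda\ge 0$, $H(s)=\frac14(s^2-1)^2$, $h(s)=H'(s)=s^3-s$. Fix $c_0>0$ and define $E[\phi]=\int_\Omega\big(\tfrac12|\nabla\phi|^2+\tfrac{\lambda}{2}\phi^2+H(\phi)\big)dx+c_0$ (so $E[\phi]\ge c_0$). Time step $\Delta t>0$. Set $\phi^0=\phi_{in}$, $\mu^0=-\Delta\phi^0+\lambda\phi^0+h(\phi^0)$, $R^0=\sqrt{E[\phi^0]}$, $\phi^{-1}=\phi^0$, $\mu^{-1}=\mu^0$. Write $\bar\phi^n=2\phi^n-\phi^{n-1}$, $\tilde\phi^{n+1/2}=\frac32\phi^n-\frac12\phi^{n-1}$, $\tilde\mu^{n+1/2}=\frac32\mu^n-\frac12\mu^{n-1}$. Scheme 2A: for $n\ge0$, $\frac{3\phi^{n+1}-4\phi^n+\phi^{n-1}}{2\Delta t}=\Delta\mu^{n+1}$, $\mu^{n+1}=-\Delta\phi^{n+1}+\lambda\phi^{n+1}+|\xi^{n+1}|^2h(\bar\phi^n)$, $\frac{R^{n+1}-R^n}{\Delta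 t}=-\frac{\xi^{n+1}}{2\sqrt{E[\tilde\phi^{n+1/2}]}}\int_\Omega|\nabla\tilde\mu^{n+1/2}|^2dx$, with $\xi^{n+1}=R^{n+1}/\sqrt{E[\bar\phi^n]}$, and $\nabla\phi^{n+1}\cdot\mathbf{n}=\nabla\mu^{n+1}\cdot\mathbf{n}=0$ on $\partial\Omega$. *)

From HB Require Import structures.
From mathcomp Require Import all_boot all_order all_algebra.
From mathcomp Require Import all_classical all_reals all_analysis.
Set Implicit Arguments. Unset Strict Implicit. Unset Printing Implicit Defensive.
Import Order.TTheory GRing.Theory Num.Theory.
Import numFieldNormedType.Exports.
Local Open Scope classical_set_scope.
Local Open Scope ring_scope.

Definition unitv {R : realType} (d : nat) (i : 'I_d) : 'rV[R]_d := delta_mx 0 i.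
Definition partial {R : realType} (d : nat) (i : 'I_d) (f : 'rV[R]_d -> R)
  : 'rV[R]_d -> R := fun x => derive f x (unitv (R:=R) i).

Definition grad_sq {R : realType} (d : nat) (f : 'rV[R]_d -> R) (x : 'rV[R]_d) : R :=
  \sum_(i < d) (partial i f x) ^+ 2.
Definition laplacian {R : realType} (d : nat) (f : 'rV[R]_d -> R) (x : 'rV[R]_d) : R :=
  \sum_(i < d) partial i (partial i f) x.
Definition grad_dot {R : realType} (d : nat) (f : 'rV[R]_d -> R) (v : 'rV[R]_d)
  (x : 'rV[R]_d) : R := \sum_(i < d) partial i f x * v 0 i.

Fixpoint Ck {R : realType} (d : nat) (k : nat) (f : 'rV[R]_d -> R) : Prop :=
  match k with
  | 0 => continuous f
  | k'.+1 => (forall x, differentiable f x) /\ (forall i : 'I_d, Ck k' (partial i f))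
  end.
Definition smooth {R : realType} (d : nat) (f : 'rV[R]_d -> R) : Prop :=
  forall k, Ck k f.

(** Iterated Lebesgue integral over R^d of an extended-real function
    (for non-negative measurable integrands this is the Lebesgue integral on
    R^d, by Tonelli). *)
Fixpoint iint {R : realType} (d : nat) : ('rV[R]_d -> \bar R) -> \bar R :=
  match d with
  | 0 => fun f => f 0
  | d'.+1 => fun f =>
      (\int[@lebesgue_measure R]_t
         iint (fun y : 'rV[R]_d' => f (row_mx (const_mx t : 'rV[R]_1) y)))%E
  end.

Definition intOmega {R : realType} (d : nat) (Omega : set 'rV[R]_d)
  (f : 'rV[R]_d -> R) : R :=
  fine (iint (fun x => ((\1_Omega x : R) * f x)%:E)).

(** A bounded domain with smooth boundary: bounded, open, connected, and given by
    a global smooth defining function rho with Omega = {rho < 0} and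
    grad rho <> 0 on {rho = 0}. *)
Definition smooth_defining_fun {R : realType} (d : nat) (Omega : set 'rV[R]_d)
  (rho : 'rV[R]_d -> R) : Prop :=
  smooth rho /\ Omega = [set x | rho x < 0] /\
  (forall x, rho x = 0 -> grad_sq rho x != 0).

Definition bounded_smooth_domain {R : realType} (d : nat) (Omega : set 'rV[R]_d)
  (rho : 'rV[R]_d -> R) : Prop :=
  open Omega /\ connected Omega /\ Omega !=set0 /\
  (exists M : R, forall x, Omega x -> `|x| <= M) /\
  smooth_defining_fun Omega rho.

Definition bdry {R : realType} (d : nat) (Omega : set 'rV[R]_d) : set 'rV[R]_d :=
  closure Omega `\` Omega.
Definition normal {R : realType} (d : nat) (rho : 'rV[R]_d -> R) (x : 'rV[R]_d)
  : 'rV[R]_d :=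
  (Num.sqrt (grad_sq rho x))^-1 *: \row_(i < d) partial i rho x.

Definition Hpot {R : realType} (s : R) : R := (s ^+ 2 - 1) ^+ 2 / 4.
Definition hpot {R : realType} (s : R) : R := s ^+ 3 - s.

Definition energy {R : realType} (d : nat) (Omega : set 'rV[R]_d) (lam c0 : R)
  (phi : 'rV[R]_d -> R) : R :=
  intOmega Omega (fun x => grad_sq phi x / 2 + lam / 2 * phi x ^+ 2 + Hpot (phi x))
  + c0.

(** Convention phi^{-1} = phi^0: prev u n = u (n-1) for n >= 1, u 0 for n = 0. *)
Definition prev {T : Type} (u : nat -> T) (n : nat) : T :=
  match n with 0 => u 0%N | n'.+1 => u n' end.

Definition extrap2 {R : realType} (d : nat) (u : nat -> 'rV[R]_d -> R) (n : nat)
  : 'rV[R]_d -> R := fun x => 2 * u n x - prev u n x.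
Definition extrap32 {R : realType} (d : nat) (u : nat -> 'rV[R]_d -> R) (n : nat)
  : 'rV[R]_d -> R := fun x => 3 / 2 * u n x - 1 / 2 * prev u n x.

Definition scheme2A {R : realType} (d : nat) (Omega : set 'rV[R]_d)
  (rho : 'rV[R]_d -> R) (lam c0 dt : R) (phi_in : 'rV[R]_d -> R)
  (phi mu : nat -> 'rV[R]_d -> R) (Rs xi : nat -> R) : Prop :=
  let E := energy Omega lam c0 in
  phi 0%N = phi_in /\
  (forall x, Omega x ->
     mu 0%N x = - laplacian phi_in x + lam * phi_in x + hpot (phi_in x)) /\
  Rs 0%N = Num.sqrt (E phi_in) /\
  (forall n, Ck 2 (phi n) /\ Ck 2 (mu n)) /\
  (forall n : nat,
     (forall x, Omega x ->
        (3 * phi n.+1 x - 4 * phi n x + prev phi n x) / (2 * dt)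
        = laplacian (mu n.+1) x) /\
     (forall x, Omega x ->
        mu n.+1 x = - laplacian (phi n.+1) x + lam * phi n.+1 x
                    + (xi n.+1) ^+ 2 * hpot (extrap2 phi n x)) /\
     (Rs n.+1 - Rs n) / dt
       = - (xi n.+1 / (2 * Num.sqrt (E (extrap32 phi n))))
           * intOmega Omega (grad_sq (extrap32 mu n)) /\
     xi n.+1 = Rs n.+1 / Num.sqrt (E (extrap2 phi n)) /\
     (forall x, bdry Omega x ->
        grad_dot (phi n.+1) (normal rho x) x = 0 /\
        grad_dot (mu n.+1) (normal rho x) x = 0)).

From HB Require Import structures.
From mathcomp Require Import all_boot all_order all_algebra.
From mathcomp Require Import all_classical all_reals all_analysis.
From mathcomp Require Import ring lra.
Import Order.TTheory GRing.Theory Num.Theory.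
Import numFieldNormedType.Exports.
Local Open Scope classical_set_scope.
Local Open Scope ring_scope.

(* The argument is purely algebraic and uses no property of the PDE part:
   1. The shifted energy satisfies E[psi] >= c0 > 0 for every psi, because the
      integrand 1/2|grad psi|^2 + lambda/2 psi^2 + H(psi) is non-negative; hence
      every square root of an energy appearing in the scheme is >= sqrt c0 > 0.
   2. Substituting xi^{n+1} = R^{n+1}/B into the R-update gives the linear
      relation R^{n+1} (1 + k) = R^n with k = dt I / (2 A B) >= 0, where A, B are
      square roots of energies and I = int |grad mu~|^2 >= 0.  So R^n > 0
      implies 0 < R^{n+1} <= R^n.
   3. Induction from R^0 = sqrt E[phi_in] > 0 gives 0 < R^n <= R^0 = M, and
      then xi^{n+1} = R^{n+1}/B <= M / sqrt c0. *)

Lemma iint_ge0 {R : realType} {d : nat} (f : 'rV[R]_d -> \bar R) :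
  (forall x, (0 <= f x)%E) -> (0 <= iint f)%E.
Proof.
elim: d f => [|d IH] f f_ge0 /=; first exact: f_ge0.
by apply: integral_ge0 => t _; apply: IH => y; exact: f_ge0.
Qed.

Lemma intOmega_ge0 {R : realType} {d : nat} (Omega : set 'rV[R]_d)
    (f : 'rV[R]_d -> R) :
  (forall x, 0 <= f x) -> 0 <= intOmega Omega f.
Proof.
move=> f_ge0; apply/fine_ge0/iint_ge0 => x.
by rewrite lee_fin mulr_ge0 // /indic; case: (_ \in _).
Qed.

Lemma grad_sq_ge0 {R : realType} {d : nat} (f : 'rV[R]_d -> R) (x : 'rV[R]_d) :
  0 <= grad_sq f x.
Proof. by apply: sumr_ge0 => i _; exact: sqr_ge0. Qed.

Lemma energy_ge_c0 {R : realType} {d : nat} (Omega : set 'rV[R]_d)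
    (lam c0 : R) (psi : 'rV[R]_d -> R) :
  0 <= lam -> c0 <= energy Omega lam c0 psi.
Proof.
move=> lam_ge0; rewrite /energy lerDr; apply: intOmega_ge0 => x.
by rewrite !addr_ge0 ?divr_ge0 ?grad_sq_ge0 ?sqr_ge0 // mulr_ge0 ?divr_ge0 ?sqr_ge0.
Qed.

Lemma sqrt_energy_ge {R : realType} {d : nat} (Omega : set 'rV[R]_d)
    (lam c0 : R) (psi : 'rV[R]_d -> R) :
  0 <= lam -> Num.sqrt c0 <= Num.sqrt (energy Omega lam c0 psi).
Proof. by move=> lam_ge0; rewrite ler_wsqrtr ?energy_ge_c0. Qed.

(* One step of the auxiliary-variable update, in abstract form: if
   (r' - r)/dt = -(r'/B/(2A)) I with dt, A, B > 0 and I >= 0, then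
   r' (1 + dt I/(2AB)) = r, so positivity of r propagates and r' <= r. *)
Lemma sav_update_pos_le {R : realType} (r r' dt A B I : R) :
  0 < dt -> 0 < A -> 0 < B -> 0 <= I -> 0 < r ->
  (r' - r) / dt = - (r' / B / (2 * A)) * I ->
  0 < r' /\ r' <= r.
Proof.
move=> dt_gt0 A_gt0 B_gt0 I_ge0 r_gt0 upd.
set k := dt * I / (2 * A * B).
have k_ge0 : 0 <= k.
  by rewrite /k divr_ge0 ?mulr_ge0 // ?(ltW dt_gt0, ltW A_gt0, ltW B_gt0).
have r_eq : r' * (1 + k) = r.
  have diff : r' - r = - (r' / B / (2 * A)) * I * dt by rewrite -upd mulfVK ?gt_eqF.
  apply/eqP; rewrite -subr_eq0; apply/eqP.
  rewrite (_ : _ - _ = r' - r + r' * k); last by ring.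
  by rewrite diff /k; field; rewrite ?gt_eqF //= ?A_gt0 ?B_gt0.
have r'_gt0 : 0 < r' by rewrite -(pmulr_lgt0 _ (_ : 0 < 1 + k)) ?r_eq //; lra.
by split=> //; rewrite -r_eq ler_peMr ?lerDl // ltW.
Qed.

Lemma pos_nonincreasing_bound {R : realType} {u : nat -> R} :
  0 < u 0%N -> (forall n, 0 < u n -> 0 < u n.+1 /\ u n.+1 <= u n) ->
  forall n, 0 < u n /\ u n <= u 0%N.
Proof.
move=> u0_gt0 step; elim=> [|n [un_gt0 un_le]]; first by [].
by have [? le_n] := step n un_gt0; split=> //; exact: le_trans un_le.
Qed.

Theorem mainTheorem12 (R : realType) (d : nat) (Omega : set 'rV[R]_d)
  (rho : 'rV[R]_d -> R) (lam c0 dt : R) (phi_in : 'rV[R]_d -> R)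
  (phi mu : nat -> 'rV[R]_d -> R) (Rs xi : nat -> R) :
  (d = 2%N \/ d = 3%N) ->
  bounded_smooth_domain Omega rho ->
  0 <= lam -> 0 < c0 -> 0 < dt ->
  smooth phi_in ->
  scheme2A Omega rho lam c0 dt phi_in phi mu Rs xi ->
  let M := Rs 0%N in
  forall n : nat,
    0 < Rs n.+1 /\ Rs n.+1 <= Rs n /\ Rs n <= M /\
    0 < xi n.+1 /\ xi n.+1 <= M / Num.sqrt c0.
Proof.
move=> _ _ lam_ge0 c0_gt0 dt_gt0 _ [_ [_ [R0_def [_ scheme]]]] M.
have sqrt_c0_gt0 : 0 < Num.sqrt c0 by rewrite sqrtr_gt0.
have sqrtE_gt0 psi : 0 < Num.sqrt (energy Omega lam c0 psi).
  exact: lt_le_trans sqrt_c0_gt0 (sqrt_energy_ge Omega lam c0 psi lam_ge0).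
have step n : 0 < Rs n -> 0 < Rs n.+1 /\ Rs n.+1 <= Rs n.
  have [_ [_ [R_upd [xi_def _]]]] := scheme n.
  rewrite xi_def in R_upd => Rn_gt0.
  apply: sav_update_pos_le dt_gt0 (sqrtE_gt0 _) (sqrtE_gt0 _) _ Rn_gt0 R_upd.
  by apply: intOmega_ge0 => x; exact: grad_sq_ge0.
have R0_gt0 : 0 < Rs 0%N by rewrite R0_def.
move=> n; have [Rn_gt0 Rn_le_M] := pos_nonincreasing_bound R0_gt0 step n.
have [R1_gt0 R1_le_Rn] := step n Rn_gt0.
have [_ [_ [_ [-> _]]]] := scheme n.
do 3 split=> //; split; first by rewrite divr_gt0.
(* xi^{n+1} = R^{n+1} / B with R^{n+1} <= M and B >= sqrt c0 > 0. *)
rewrite ler_pM ?invr_ge0 ?sqrtr_ge0 ?(ltW R1_gt0) ?(le_trans R1_le_Rn) //.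
by rewrite lef_pV2 ?posrE ?sqrtE_gt0 // sqrt_energy_ge.
Qed.
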